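(* For any two $X$-trees $T_1$ and $T_2$, one has $\mathbb{M}(T_1)=\mathbb{M}(T_2)$ if and only if $T_1\simeq T_2$.
   Context: Let $X$ be a finite set with $|X|=n\ge 3$. An $X$-tree is a finite tree $T=(V,E)$ whose set of degree-1 vertices is exactly $X$ and which has no vertices of degree $2$; $T_1\simeq T_2$ means there is a graph isomorphism $T_1\to T_2$ fixing every element of $X$. A cord is a $2$-subset $xy$ of $X$. For each cord $xy$, $\lambda^T_{xy}:\mathbb{R}^E\to\mathbb{R}$, $\omega\mapsto\sum_{e\in E(x|y)}\omega(e)$ where $E(x|y)$ is the edge set of the path from $x$ to $y$. $\mathbb{M}(T)$ is the matroid on ground set $\binom{X}{2}$ represented over $\mathbb{R}$ by $xy\mapsto\lambda^T_{xy}$ (i.e. a set of cords is independent iff the corresponding forms are linearly independent). Equality of matroids means equality of their collections of independent sets on the common ground set $\binom{X}{2}$. *)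

From HB Require Import structures.
From mathcomp Require Import all_boot all_order all_algebra.
Set Implicit Arguments. Unset Strict Implicit. Unset Printing Implicit Defensive.
Import Order.TTheory GRing.Theory Num.Theory.

Record Xtree (X : finType) := XTree {
  V : finType;
  adj : rel V;
  adj_sym : symmetric adj;
  adj_irr : irreflexive adj;
  adj_conn : forall u v : V, connect adj u v;
  adj_acyc : forall s : seq V, 2 < size s -> uniq s -> ~~ cycle adj s;
  leaf : X -> V;
  leaf_inj : injective leaf;
  leaf_deg1 : forall v : V, (#|[pred w | adj v w]| == 1) = (v \in codom leaf);
  no_deg2 : forall v : V, #|[pred w | adj v w]| != 2
}.

Arguments adj {X} x _ _ : rename.
Arguments leaf {X} x _ : rename.

Section XtreeDefs.
Variable X : finType.

Definition edges (T : Xtree X) : {set {set V T}} :=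
  [set e : {set V T} | [exists u : V T, exists v : V T, adj T u v && (e == [set u; v])]].

Definition edge (T : Xtree X) := {e : {set V T} | e \in edges T}.

Definition walk_edges (T : Xtree X) (x : V T) (p : seq (V T)) : {set {set V T}} :=
  [set e | has (fun uv : V T * V T => e == [set uv.1; uv.2]) (zip (x :: p) p)].

(* E(x|y): edges on a simple path from x to y (in a tree this path is unique;
   simple paths have fewer than #|V| steps). *)
Definition pathE (T : Xtree X) (x y : V T) : {set {set V T}} :=
  [set e | [exists k : 'I_#|V T|, exists p : k.-tuple (V T),
             [&& path (adj T) x p, last x p == y, uniq (x :: p)
               & e \in walk_edges x p]]].

(* The linear form lambda^T_c : R^E -> R associated with a cord c = {x,y}:
   sum of omega(e) over e in E(x|y). *)
Definition lam (R : realFieldType) (T : Xtree X) (c : {set X})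
  (w : {ffun edge T -> R}) : R :=
  (\sum_(e : edge T | [exists x in c, exists y in c,
                         val e \in pathE (leaf T x) (leaf T y)]) w e)%R.

Definition cords : {set {set X}} := [set c : {set X} | #|c| == 2].

(* A set S of cords is independent in M(T) iff the forms lam_c, c in S,
   are linearly independent over R. *)
Definition indep (R : realFieldType) (T : Xtree X) (S : {set {set X}}) : Prop :=
  forall coef : {set X} -> R,
    (forall w : {ffun edge T -> R}, (\sum_(c in S) coef c * lam c w = 0)%R) ->
    forall c, c \in S -> coef c = 0%R.

Definition matroid_eq (R : realFieldType) (T1 T2 : Xtree X) : Prop :=
  forall S : {set {set X}}, S \subset cords -> (indep R T1 S <-> indep R T2 S).

Definition xtree_iso (T1 T2 : Xtree X) : Prop :=
  exists f : V T1 -> V T2,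
    [/\ bijective f,
        forall u v, adj T2 (f u) (f v) = adj T1 u v
      & forall x, f (leaf T1 x) = leaf T2 x].

End XtreeDefs.

From HB Require Import structures.
From mathcomp Require Import all_boot all_order all_algebra lra.
Set Implicit Arguments. Unset Strict Implicit. Unset Printing Implicit Defensive.
Import GRing.Theory.

(* Deleting an edge pq splits T in two; [side p q z] says that z lies on p's
   side.  Any two splits are compatible, which makes T a median graph: x, y, z
   have a unique median, the vertex on the majority side of every split.
   Every vertex is the median of three leaves, and adjacency of two vertices
   can be described by medians of leaves alone ([median_edge]).

   The form of a cord xy sums the edge weights over the edges splitting x
   from y.  For four distinct leaves the cords ac, bd, ad, bc are independent
   iff some edge separates a from b and c from d, iff the medians of a, b, c
   and of a, b, d differ (four-point test).  So equal matroids have the same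
   four-point coincidences among leaf medians, and an exchange property of
   medians reduces every coincidence of leaf medians to these.  Hence
   median(a, b, c) in T1 |-> median(a, b, c) in T2 is a well-defined injection
   preserving leaves and adjacency; injections in both directions yield a
   bijection that also reflects adjacency.  Conversely an isomorphism fixing
   the leaves preserves every split, hence every linear dependency. *)

Lemma connect_sub_from (T : finType) (e e' : rel T) x y :
  (forall u v, connect e x u -> e u v -> e' u v) ->
  connect e x y -> connect e' x y.
Proof.
move=> sub /connectP [s pth ->]; apply/connectP; exists s => //.
elim: s x pth sub => [|z s IH] x //= /andP [exz pth] sub.
rewrite (sub x z (connect0 _ _) exz) /=; apply: IH => // u v xu; apply: sub.
exact: connect_trans (connect1 exz) xu.
Qed.

Section Splits.
Variables (X : finType) (T : Xtree X).
Local Notation V := (V T).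
Local Notation adj := (adj T).

Lemma adjC x y : adj x y = adj y x. Proof. exact: adj_sym. Qed.

Lemma adj_neq x y : adj x y -> x != y.
Proof. by apply: contraTneq => ->; rewrite adj_irr. Qed.

Definition same_edge (p q r s : V) :=
  ((r == p) && (s == q)) || ((r == q) && (s == p)).

Lemma same_edgeC p q r s : same_edge p q r s = same_edge q p r s.
Proof. by rewrite /same_edge orbC. Qed.

Lemma same_edge_sym p q r s : same_edge p q r s = same_edge r s p q.
Proof.
by rewrite /same_edge (eq_sym r p) (eq_sym s q) (eq_sym r q) (eq_sym s p) [(q == r) && _]andbC.
Qed.

Lemma same_edge_rev p q r s : same_edge p q r s = same_edge p q s r.
Proof.
by rewrite /same_edge orbC; case: (r == p); case: (s == q); case: (r == q); case: (s == p).
Qed.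

Definition cut (p q : V) : rel V := fun x y => adj x y && ~~ same_edge p q x y.
Definition side (p q z : V) : bool := connect (cut p q) p z.

Lemma cut_sym p q : symmetric (cut p q).
Proof. by move=> x y; rewrite /cut adjC same_edge_rev. Qed.

Lemma cutC p q : cut p q =2 cut q p.
Proof. by move=> x y; rewrite /cut same_edgeC. Qed.

Lemma side_refl p q : side p q p.
Proof. exact: connect0. Qed.

Lemma side_cut p q y z : connect (cut p q) y z -> side p q y = side p q z.
Proof.
move=> yz; apply/idP/idP => [py|pz]; first exact: connect_trans py yz.
by apply: connect_trans pz _; rewrite (sym_connect_sym (@cut_sym p q)).
Qed.

Lemma side_edge p q r s : adj r s -> ~~ same_edge p q r s -> side p q r = side p q s.
Proof. by move=> ars ne; apply: side_cut; apply: connect1; rewrite /cut ars. Qed.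

Lemma side_swap p q z : side q p z = connect (cut p q) q z.
Proof. exact: (eq_connect (@cutC q p)). Qed.

(* Deleting an edge disconnects its ends: a p-q path avoiding pq closes a cycle. *)
Lemma side_far p q : adj p q -> ~~ side p q q.
Proof.
move=> apq; apply/negP => /connectP [s pth lst].
move: lst; case: (shortenP pth) => s' pth' uq _ lst'.
have pa : path adj p s' by apply: sub_path pth' => x y /andP [].
case: s' pth' uq lst' pa => [|z [|z2 s3]] pth' uq lst' pa.
- by move: apq; rewrite /= in lst'; rewrite -lst' adj_irr.
- by rewrite /= in lst'; move: pth'; rewrite /= -lst' /cut apq /same_edge !eqxx.
apply: (negP (adj_acyc (s := p :: z :: z2 :: s3) _ uq)) => //.
by rewrite /cycle rcons_path pa /=; move: lst' => /= <-; rewrite adjC.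
Qed.

(* Every vertex lies on one of the two sides: following T from p, only the
   edge pq can switch sides. *)
Lemma side_total p q z : adj p q -> side p q z || side q p z.
Proof.
move=> apq; pose A := [pred y | side p q y || side q p y].
have step x y : adj x y -> x \in A -> y \in A.
  move=> axy; rewrite !inE; case: (boolP (same_edge p q x y)) => [|ne].
    by case/orP => /andP [_ /eqP ->]; rewrite side_refl ?orbT.
  by rewrite (side_edge axy ne) (side_edge axy) // same_edgeC.
have clA : closed adj A by move=> x y axy; apply/idP/idP; apply: step; rewrite // adjC.
by have := closed_connect clA (adj_conn p z); rewrite !inE side_refl => <-.
Qed.

Lemma sideC p q z : adj p q -> side q p z = ~~ side p q z.
Proof.
move=> apq; have := side_total z apq; case: (boolP (side p q z)) => //= pz _.
apply/negP; rewrite side_swap => qz; apply: (negP (side_far apq)).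
by apply: connect_trans pz _; rewrite (sym_connect_sym (@cut_sym p q)).
Qed.

(* If z is on the far side of pq from r, the walk in T \ pq reaching z from
   an end of pq avoids the edge rs, so z sits on the same side of rs as p. *)
Lemma side_beyond p q r s z : adj p q -> adj r s -> ~~ same_edge p q r s ->
  side p q z != side p q r -> side r s z = side r s p.
Proof.
move=> apq ars ne zr; pose t := if side p q z then p else q.
have tz : connect (cut p q) t z.
  rewrite /t; case: ifP => // pz; rewrite -side_swap sideC //.
  by rewrite pz.
have tr : ~~ connect (cut p q) t r.
  apply: contra zr; rewrite /t; case: ifP => _ tr; first by rewrite eq_sym eqb_id.
  by rewrite eq_sym eqbF_neg -sideC // side_swap.
have ts : ~~ connect (cut p q) t s.
  apply: contra tr => /connect_trans -> //; apply: connect1.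
  by rewrite cut_sym /cut ars.
have : connect (cut r s) t z.
  apply: (connect_sub_from _ tz) => u v tu /andP [auv _]; rewrite /cut auv /=.
  by apply/negP => /orP [] /andP [/eqP eu _]; [move: tr | move: ts]; rewrite -eu tu.
move/side_cut <-; rewrite /t; case: ifP => // _.
by symmetry; apply: side_edge; rewrite // -same_edge_sym.
Qed.

Lemma splits_compatible p q r s : adj p q -> adj r s ->
  exists i j, forall z, ~~ ((side p q z == i) && (side r s z == j)).
Proof.
move=> apq ars; case: (boolP (same_edge p q r s)) => [|ne].
  case/orP => /andP [/eqP er /eqP es]; subst r s.
    by exists true, false => z; case: (side p q z).
  exists true, true => z; apply/negP => /andP [/eqP h1 /eqP h2].
  by move: h2; rewrite sideC // h1.
exists (~~ side p q r), (~~ side r s p) => z; apply/negP => /andP [/eqP h1 /eqP h2].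
have zr : side p q z != side p q r by rewrite h1; case: (side p q r).
by move: h2; rewrite (side_beyond apq ars ne zr); case: (side r s p).
Qed.
End Splits.

Section Branches.
Variables (X : finType) (T : Xtree X).
Local Notation adj := (adj T).
Local Notation side := (@side X T).

(* The branch of T at u containing z: the first step of a u-z path. *)
Lemma branch_of u z : u != z -> exists2 n, adj u n & side n u z.
Proof.
move=> uz; have /connectP [s pth lst] := adj_conn u z.
move: lst; case: (shortenP pth) => [[|n s']] /=; first by move=> _ _ _ zu; rewrite zu eqxx in uz.
move=> /andP [aun pth'] /andP [nin _] _ lst; exists n => //; apply/connectP; exists s' => //.
apply: (sub_in_path (P := predC1 u)) pth'; last first.
  by apply/allP => x xin; rewrite inE; apply: contraNneq nin => <-.
move=> x y; rewrite !inE => xu yu axy.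
by rewrite /cut axy /same_edge (negbTE xu) (negbTE yu) !andbF.
Qed.

Lemma side_neighbour u k m : adj u k -> adj u m -> k != m -> side m u k = false.
Proof.
move=> auk aum km; rewrite -(@side_edge _ _ m u u k) //.
  by apply/negbTE/side_far; rewrite adjC.
by rewrite /same_edge (negbTE km) (negbTE (adj_neq aum)) !andbF.
Qed.

Lemma branch_unique u k m z : adj u k -> adj u m -> side k u z -> side m u z -> k = m.
Proof.
move=> auk aum kz mz; apply/eqP; apply: contraT => km.
have aku : adj k u by rewrite adjC.
have amu : adj m u by rewrite adjC.
have [i [j H]] := splits_compatible aku amu.
have := H u; have := H k; have := H m; have := H z; clear H.
rewrite kz mz !side_refl (side_neighbour auk aum km) (side_neighbour aum auk) 1?eq_sym //.
by rewrite !(negbTE (side_far _)) //; case: i; case: j.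
Qed.

Lemma side_sub_branch u w n z : adj u w -> adj w n -> n != u -> side n w z -> side w u z.
Proof.
move=> auw awn nu nz; have awu : adj w u by rewrite adjC.
have := side_total z auw; case: (boolP (side w u z)) => // _; rewrite orbF => uz.
by rewrite (branch_unique awn awu nz uz) eqxx in nu.
Qed.

Lemma far_branch p q u : adj p q -> u != p -> u != q ->
  exists2 n, adj u n & forall z, side p q z != side p q u -> side n u z.
Proof.
move=> apq up uq; pose r := if side p q u then q else p.
have rS : side p q r != side p q u.
  by rewrite /r; case: ifP => _; rewrite ?side_refl ?(negbTE (side_far apq)).
have ur : u != r by rewrite /r; case: (side p q u).
have [n aun nr] := branch_of ur; exists n => // z zu.
have anu : adj n u by rewrite adjC.
have [i [j H]] := splits_compatible apq anu.
have e1 : side n u u = false by apply/negbTE/side_far.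
have e2 : side p q n = side p q u.
  by apply: side_edge => //; rewrite /same_edge (negbTE up) (negbTE uq) !andbF.
have := H u; have := H n; have := H r; have := H z; clear H; move: rS zu.
rewrite e1 e2 nr side_refl.
by case: (side p q u); case: (side p q r); case: (side p q z); case: (side n u z); case: i; case: j.
Qed.
End Branches.

Definition maj (a b c : bool) := [|| a && b, a && c | b && c].

Lemma maj_neg a b c : maj (~~ a) (~~ b) (~~ c) = ~~ maj a b c.
Proof. by case: a; case: b; case: c. Qed.

Lemma maj_C12 a b c : maj a b c = maj b a c. Proof. by case: a; case: b; case: c. Qed.
Lemma maj_C23 a b c : maj a b c = maj a c b. Proof. by case: a; case: b; case: c. Qed.

Section Medians.
Variables (X : finType) (T : Xtree X).
Local Notation V := (V T).
Local Notation adj := (adj T).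
Local Notation side := (@side X T).

Definition is_median (v x y z : V) :=
  [forall p, forall q, adj p q ==> (side p q v == maj (side p q x) (side p q y) (side p q z))].

Lemma is_medianP v x y z :
  reflect (forall p q, adj p q -> side p q v = maj (side p q x) (side p q y) (side p q z))
          (is_median v x y z).
Proof.
apply: (iffP forallP) => [H p q apq | H p]; last by apply/forallP => q; apply/implyP => /H ->.
by have /forallP/(_ q)/implyP/(_ apq)/eqP := H p.
Qed.

Lemma is_median_C12 v x y z : is_median v x y z = is_median v y x z.
Proof. by apply/is_medianP/is_medianP => H p q apq; rewrite H // maj_C12. Qed.

Lemma is_median_C23 v x y z : is_median v x y z = is_median v x z y.
Proof. by apply/is_medianP/is_medianP => H p q apq; rewrite H // maj_C23. Qed.

(* Medians are unique: distinct v, v' are separated by the edge from v towards v'. *)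
Lemma median_unique v v' x y z : is_median v x y z -> is_median v' x y z -> v = v'.
Proof.
move=> /is_medianP h /is_medianP h'; apply/eqP; apply: contraT => vv.
have [n avn nv'] := branch_of vv; have anv : adj n v by rewrite adjC.
by have := h n v anv; rewrite -(h' n v anv) nv' (negbTE (side_far anv)).
Qed.

Lemma median_at u x y z :
  (forall n, adj u n -> ~~ maj (side n u x) (side n u y) (side n u z)) -> is_median u x y z.
Proof.
move=> H; apply/is_medianP => p q apq.
have [up|up] := eqVneq u p.
  by subst p; rewrite side_refl; move: (H q apq); rewrite !(sideC _ apq) maj_neg negbK.
have [uq|uq] := eqVneq u q.
  by subst q; rewrite (negbTE (side_far apq)); apply/esym/negbTE/H; rewrite adjC.
have [n aun Hn] := far_branch apq up uq.
have near w : side n u w || (side p q w == side p q u).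
  by have [_|/Hn ->] := eqVneq (side p q w) (side p q u); rewrite ?orbT.
have := H n aun; move: (near x) (near y) (near z).
move: (side p q u) (side p q x) (side p q y) (side p q z) (side n u x) (side n u y) (side n u z).
by do 7! case.
Qed.

Lemma not_median_at u n x y z :
  adj u n -> maj (side n u x) (side n u y) (side n u z) -> ~~ is_median u x y z.
Proof.
move=> aun hm; apply/negP => /is_medianP/(_ n u); rewrite adjC => /(_ aun).
by rewrite (negbTE (side_far _)) ?hm // adjC.
Qed.

Lemma far_side_branch p q r v n w : adj p q -> side p q r != side p q v ->
  adj v n -> side n v r -> side p q w = side p q r -> side n v w.
Proof.
move=> apq rv avn nr wr; have anv : adj n v by rewrite adjC.
have [vp|vp] := eqVneq v p.
  subst v; have rp : side p q r = false by move: rv; rewrite side_refl; case: (side p q r).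
  have -> : n = q by apply: (branch_unique avn apq nr); rewrite sideC // rp.
  by rewrite sideC // wr rp.
have [vq|vq] := eqVneq v q.
  subst v; have apq' : adj q p by rewrite adjC.
  have rq : side p q r by move: rv; rewrite (negbTE (side_far apq)); case: (side p q r).
  have -> : n = p by apply: (branch_unique avn apq' nr).
  by rewrite wr rq.
have [m avm Hm] := far_branch apq vp vq.
by rewrite (branch_unique avn avm nr (Hm r rv)); apply: Hm; rewrite wr.
Qed.

Definition wrong_darts x y z v := [set g : V * V | adj g.1 g.2 &&
  (side g.1 g.2 v != maj (side g.1 g.2 x) (side g.1 g.2 y) (side g.1 g.2 z))].

(* A vertex that is not a median can be moved one step towards the majority,
   strictly decreasing its set of wrong darts. *)
Lemma median_step x y z v : ~~ is_median v x y z ->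
  exists w, wrong_darts x y z w \proper wrong_darts x y z v.
Proof.
case/forallPn => p /forallPn [q]; rewrite negb_imply => /andP [apq bad].
pose r := if side p q v then q else p.
have rv : side p q r != side p q v.
  by rewrite /r; case: ifP => _; rewrite ?side_refl ?(negbTE (side_far apq)).
have mr : maj (side p q x) (side p q y) (side p q z) = side p q r.
  by move: bad rv; case: maj; case: (side p q v); case: (side p q r).
have vr : v != r by apply: contraNneq rv => ->.
have [w avw wr] := branch_of vr; have awv : adj w v by rewrite adjC.
have toward : maj (side w v x) (side w v y) (side w v z).
  have far t : (side p q t == side p q r) ==> side w v t.
    by apply/implyP => /eqP; apply: far_side_branch apq rv avw wr.
  move: mr (far x) (far y) (far z).
  move: (side p q r) (side p q x) (side p q y) (side p q z) (side w v x) (side w v y) (side w v z).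
  by do 7! case.
exists w; apply/properP; split.
  apply/subsetP => [[g1 g2]]; rewrite !inE /= => /andP [ag hg]; rewrite ag /=.
  have [se|ne] := boolP (same_edge g1 g2 v w); last by rewrite (side_edge avw ne).
  exfalso; move: hg; case/orP: se => /andP [/eqP ev /eqP ew]; subst g1 g2.
    by rewrite (negbTE (side_far avw)) !(sideC _ awv) maj_neg toward.
  by rewrite side_refl toward.
by exists (w, v); rewrite !inE /= awv /= ?(negbTE (side_far awv)) ?side_refl ?toward.
Qed.

Lemma median_exists x y z : exists v, is_median v x y z.
Proof.
case: (arg_minnP (fun v => #|wrong_darts x y z v|) (isT : predT x)) => v _ vmin.
exists v; apply: contraT => nv; have [w /proper_card] := median_step nv.
by rewrite ltnNge vmin.
Qed.

Definition median x y z := xchoose (median_exists x y z).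

Lemma medianP x y z : is_median (median x y z) x y z.
Proof. exact: (xchooseP (median_exists x y z)). Qed.

Lemma median_eq v x y z : is_median v x y z -> median x y z = v.
Proof. exact: median_unique (medianP x y z). Qed.

Lemma median_C12 x y z : median x y z = median y x z.
Proof. by apply: median_eq; rewrite is_median_C12 medianP. Qed.

Lemma median_C23 x y z : median x y z = median x z y.
Proof. by apply: median_eq; rewrite is_median_C23 medianP. Qed.

Lemma median_xxz x z : median x x z = x.
Proof. by apply: median_eq; apply/is_medianP => p q _; case: (side p q x); case: (side p q z). Qed.
End Medians.

Section Leaves.
Variables (X : finType) (T : Xtree X).
Local Notation V := (V T).
Local Notation adj := (adj T).
Local Notation side := (@side X T).
Local Notation leaf := (leaf T).

Lemma leaf_neighbour x : exists y, adj (leaf x) y /\ forall w, adj (leaf x) w -> w = y.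
Proof.
have := leaf_deg1 (leaf x); rewrite codom_f => /card1P [y Hy].
exists y; split=> [|w aw]; first by have := Hy y; rewrite !inE eqxx.
by have := Hy w; rewrite !inE aw => /esym/eqP.
Qed.

Lemma side_leaf x y z : adj (leaf x) y -> side (leaf x) y z = (z == leaf x).
Proof.
move=> axy; have [->|zx] := eqVneq z (leaf x); first exact: side_refl.
rewrite eq_sym in zx; have [n an nz] := branch_of zx.
have [y' [_ uy]] := leaf_neighbour x.
rewrite (uy n an) -(uy y axy) in nz.
by apply/negbTE; rewrite -sideC.
Qed.

(* An inner vertex has degree at least 3, so two more neighbours besides v. *)
Lemma inner_branching u v : adj u v -> u \notin codom leaf ->
  exists n1 n2, [/\ adj u n1, adj u n2, n1 != n2, n1 != v & n2 != v].
Proof.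
move=> auv nl; set N := [pred w | adj u w].
have d1 : #|N| != 1 by rewrite (leaf_deg1 u).
have d2 : #|N| != 2 by apply: no_deg2.
have : 1 < #|[predD1 N & v]|.
  by move: d1 d2; rewrite (cardD1 v N) inE auv; case: #|_| => [|[|]].
case/card_gt1P => n1 [n2 [h1 h2 h12]]; exists n1, n2.
by move: h1 h2; rewrite !inE => /andP [-> ->] /andP [-> ->].
Qed.

(* Darts separating u from z; their number measures the distance from u. *)
Definition separating (u z : V) :=
  [set g : V * V | adj g.1 g.2 && (side g.1 g.2 u != side g.1 g.2 z)].

Lemma deeper_vertex u n z : adj u n -> side n u z -> z \notin codom leaf ->
  exists2 z', side n u z' & separating u z \proper separating u z'.
Proof.
move=> aun nz zl; have anu : adj n u by rewrite adjC.
have zu : z != u by apply: contraTneq nz => ->; apply: side_far.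
have [w azw wu] := branch_of zu.
have [n1 [n2 [a1 a2 n12 n1w n2w]]] := inner_branching azw zl.
have [z' [az' z'w]] : exists z', adj z z' /\ z' != w.
  by case: (eqVneq n1 w) => [e|]; [exists n2; rewrite -e eq_sym | exists n1].
have az'z : adj z' z by rewrite adjC.
have uz' : side z z' u by apply: side_sub_branch az'z azw _ wu; rewrite eq_sym.
have ne : ~~ same_edge n u z z'.
  apply/negP => /orP [] /andP [/eqP ezn /eqP ez'u]; last by rewrite ezn eqxx in zu.
  subst z z'; have := branch_unique azw az' wu (side_refl _ _).
  by move=> ew; rewrite ew eqxx in z'w.
exists z'; first by rewrite -(side_edge az' ne).
apply/properP; split.
  apply/subsetP => [[g1 g2]]; rewrite !inE /= => /andP [ag hg]; rewrite ag /=.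
  have [se|ne'] := boolP (same_edge g1 g2 z z'); last by rewrite -(side_edge az' ne').
  exfalso; move: hg; case/orP: se => /andP [/eqP e1 /eqP e2]; subst g1 g2.
    by rewrite uz' side_refl.
  by rewrite !(sideC _ az') uz' side_refl.
by exists (z, z'); rewrite !inE /= az' /= uz' ?side_refl ?(negbTE (side_far az')).
Qed.

Lemma side_has_leaf u n : adj u n -> exists x, side n u (leaf x).
Proof.
move=> aun; case: (arg_maxnP (fun z => #|separating u z|) (side_refl n u)) => z nz zmax.
have [/codomP [x ex]|zl] := boolP (z \in codom leaf); first by exists x; rewrite -ex.
have [z' nz' deeper] := deeper_vertex aun nz zl.
by have /= := zmax z' nz'; rewrite leqNgt (proper_card deeper).
Qed.

(* Medians of leaf triples: the only vertices visible through cords. *)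
Definition leaf_median (a b c : X) := median (leaf a) (leaf b) (leaf c).

Lemma leaf_median_inner a b c x : a != b -> a != c -> b != c -> leaf_median a b c != leaf x.
Proof.
move=> ab ac bc; have [y [axy _]] := leaf_neighbour x.
apply/eqP => e; move/is_medianP: (medianP (leaf a) (leaf b) (leaf c)) => /(_ _ _ axy).
rewrite /leaf_median in e; rewrite e side_refl !side_leaf // !(inj_eq (@leaf_inj _ T)).
by move: ab ac bc; case: (a =P x) => [->|_]; case: (b =P x) => [->|_]; case: (c =P x) => [->|_];
  rewrite ?eqxx.
Qed.

Lemma median_three_branches u k1 k2 k3 x y z : adj u k1 -> adj u k2 -> adj u k3 ->
  k1 != k2 -> k1 != k3 -> k2 != k3 -> side k1 u x -> side k2 u y -> side k3 u z ->
  is_median u x y z.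
Proof.
move=> a1 a2 a3 n12 n13 n23 h1 h2 h3; apply: median_at => m am.
apply/negP; case/or3P => /andP [g1 g2].
- by move: n12; rewrite (branch_unique a1 am h1 g1) (branch_unique a2 am h2 g2) eqxx.
- by move: n13; rewrite (branch_unique a1 am h1 g1) (branch_unique a3 am h3 g2) eqxx.
- by move: n23; rewrite (branch_unique a2 am h2 g1) (branch_unique a3 am h3 g2) eqxx.
Qed.

Lemma leaf_median_surj (x0 : X) v : exists a b c, leaf_median a b c = v.
Proof.
have [/codomP [x ->]|nl] := boolP (v \in codom leaf); first by exists x, x, x; apply: median_xxz.
have vx : v != leaf x0 by apply: contraNneq nl => ->; apply: codom_f.
have [n avn _] := branch_of vx.
have [n1 [n2 [a1 a2 n12 n1n n2n]]] := inner_branching avn nl.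
have [a ha] := side_has_leaf avn; have [b hb] := side_has_leaf a1; have [c hc] := side_has_leaf a2.
exists a, b, c; apply: median_eq; apply: (median_three_branches avn a1 a2 _ _ n12 ha hb hc);
  by rewrite eq_sym.
Qed.
End Leaves.

Section Exchange.
Variables (X : finType) (T : Xtree X).
Local Notation adj := (adj T).
Local Notation side := (@side X T).
Local Notation median := (@median X T).

Lemma compatible_four p q r s v z x y : adj p q -> adj r s ->
  side p q z != side p q v -> side r s z != side r s v ->
  side p q x != side p q v -> side r s x == side r s v ->
  side p q y == side p q v -> side r s y != side r s v -> False.
Proof.
move=> apq ars; have [i [j H]] := splits_compatible apq ars.
have := H v; have := H z; have := H x; have := H y; clear H.
move: (side p q v) (side p q z) (side p q x) (side p q y) (side r s v) (side r s z)
  (side r s x) (side r s y) i j.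
by do 10! case.
Qed.

Lemma crossing_darts p q r s a b v x y : adj p q -> adj r s ->
  side p q a != side p q b -> side r s a != side r s b ->
  (side p q a != side p q v) = (side r s a != side r s v) ->
  side p q x != side p q v -> side r s x == side r s v ->
  side p q y == side p q v -> side r s y != side r s v -> False.
Proof.
move=> apq ars abpq abrs same xp xr yp yr.
have [aoff|aon] := boolP (side p q a != side p q v).
  by apply: (compatible_four apq ars aoff _ xp xr yp yr); rewrite -same.
have aon' : ~~ (side r s a != side r s v) by rewrite -same.
have boff pp qq : side pp qq a != side pp qq b -> ~~ (side pp qq a != side pp qq v) ->
    side pp qq b != side pp qq v.
  by case: (side pp qq a); case: (side pp qq b); case: (side pp qq v).
exact: (compatible_four apq ars (boff _ _ abpq aon) (boff _ _ abrs aon') xp xr yp yr).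
Qed.

Lemma exchange_dart a b c t u1 u2 v : is_median v a b c -> is_median v t u1 u2 ->
  median a b t != v -> exists p q, [/\ adj p q, side p q a != side p q b,
    side p q t != side p q v, side p q u1 == side p q v & side p q u2 == side p q v].
Proof.
move=> /is_medianP hv /is_medianP hv' ne.
have : ~~ is_median v a b t by apply: contra ne => /median_eq ->.
case/forallPn => p /forallPn [q]; rewrite negb_imply => /andP [apq bad].
exists p, q; move: bad (hv p q apq) (hv' p q apq).
by case: (side p q v); case: (side p q a); case: (side p q b); case: (side p q c);
  case: (side p q t); case: (side p q u1); case: (side p q u2).
Qed.

Lemma median_exchange a b c a' b' c' : median a b c = median a' b' c' ->
  [|| median a b a' == median a b c, median a b b' == median a b c
    | median a b c' == median a b c].
Proof.
set v := median a b c => e; have hv : is_median v a b c := medianP a b c.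
have hv1 : is_median v a' b' c' by rewrite e; apply: medianP.
have hv2 : is_median v b' a' c' by rewrite -is_median_C12.
have hv3 : is_median v c' a' b' by rewrite -is_median_C12 is_median_C23.
apply: contraT => /norP [n1 /norP [n2 n3]]; exfalso.
have [p1 [q1 [a1 s1 f1 b1 c1]]] := exchange_dart hv hv1 n1.
have [p2 [q2 [a2 s2 f2 a2' c2]]] := exchange_dart hv hv2 n2.
have [p3 [q3 [a3 s3 f3 a3' b3]]] := exchange_dart hv hv3 n3.
have [k12|n12] := eqVneq (side p1 q1 a != side p1 q1 v) (side p2 q2 a != side p2 q2 v).
  exact: (crossing_darts a1 a2 s1 s2 k12 f1 a2' b1 f2).
have [k13|n13] := eqVneq (side p1 q1 a != side p1 q1 v) (side p3 q3 a != side p3 q3 v).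
  exact: (crossing_darts a1 a3 s1 s3 k13 f1 a3' c1 f3).
have k23 : (side p2 q2 a != side p2 q2 v) = (side p3 q3 a != side p3 q3 v).
  move: n12 n13; case: (side p1 q1 a != side p1 q1 v);
  by case: (side p2 q2 a != side p2 q2 v); case: (side p3 q3 a != side p3 q3 v).
exact: (crossing_darts a2 a3 s2 s3 k23 f2 b3 c2 f3).
Qed.
End Exchange.

Section EdgesFromMedians.
Variables (X : finType) (T : Xtree X).
Local Notation V := (V T).
Local Notation adj := (adj T).
Local Notation side := (@side X T).
Local Notation leaf := (leaf T).
Local Notation md := (leaf_median T).

Definition cross_split (a b c d : X) := [exists p, exists q, adj p q &&
  (side p q (leaf a) != side p q (leaf b)) && (side p q (leaf c) != side p q (leaf d))].

Lemma leaf_median_cross a b c d : (md a b c == md a b d) = ~~ cross_split a b c d.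
Proof.
have hc := medianP (leaf a) (leaf b) (leaf c); have hd := medianP (leaf a) (leaf b) (leaf d).
rewrite /leaf_median; apply/idP/idP => [/eqP e|ncross].
  apply/negP => /existsP [p /existsP [q /andP [/andP [apq h1] h2]]].
  move/is_medianP: hc => /(_ p q apq); rewrite e; move/is_medianP: hd => /(_ p q apq) ->.
  by move: h1 h2; case: (side p q (leaf a)); case: (side p q (leaf b));
    case: (side p q (leaf c)); case: (side p q (leaf d)).
apply/eqP/esym/median_eq/is_medianP => p q apq; move/is_medianP: hc => -> //.
have : ~~ ((side p q (leaf a) != side p q (leaf b)) && (side p q (leaf c) != side p q (leaf d))).
  by apply: contra ncross => h; apply/existsP; exists p; apply/existsP; exists q; rewrite apq.
by case: (side p q (leaf a)); case: (side p q (leaf b));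
  case: (side p q (leaf c)); case: (side p q (leaf d)).
Qed.

Lemma median_replace p q a b c d v : adj p q -> side p q a = side p q b ->
  side p q c = side p q d -> side p q a != side p q c -> is_median v a b c -> is_median v a b d.
Proof.
move=> apq hab hcd hac /is_medianP hv; apply/is_medianP => r s ars; rewrite hv //.
have [i [j H]] := splits_compatible apq ars.
have := H a; have := H b; have := H c; have := H d; clear H; move: hac; rewrite -hab -hcd.
move: (side p q a) (side p q c) (side r s a) (side r s b) (side r s c) (side r s d) i j.
by do 8! case.
Qed.

(* Median description of an edge uv, with leaves a, b near u and c, d near v. *)
Definition median_edge (u v : V) := exists a b c d : X,
  [/\ [/\ md a b c = u, md a b d = u, md c d a = v & md c d b = v], u != v &
      forall e, md a b e = u -> md c d e = v -> md a c e = u \/ md a c e = v].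

Lemma leaves_near u v : adj u v -> exists a b : X,
  [/\ side u v (leaf a), side u v (leaf b) &
      forall n, adj u n -> ~~ (side n u (leaf a) && side n u (leaf b))].
Proof.
move=> auv; have avu : adj v u by rewrite adjC.
have [/codomP [x ex]|nl] := boolP (u \in codom leaf).
  by exists x, x; rewrite -ex side_refl; split=> // n aun; rewrite (negbTE (side_far _)) // adjC.
have [n1 [n2 [a1 a2 n12 n1v n2v]]] := inner_branching auv nl.
have [a ha] := side_has_leaf a1; have [b hb] := side_has_leaf a2.
exists a, b; split; [exact: side_sub_branch avu a1 n1v ha | exact: side_sub_branch avu a2 n2v hb|].
move=> n aun; apply/negP => /andP [g1 g2].
by move: n12; rewrite (branch_unique a1 aun ha g1) (branch_unique a2 aun hb g2) eqxx.
Qed.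

Lemma median_near_side u v x z e : adj u v -> side u v x -> side u v e -> side v u z ->
  (forall n, adj u n -> n != v -> ~~ (side n u x && side n u e)) -> is_median u x z e.
Proof.
move=> auv hx he hz H; apply: median_at => n aun.
have [->|nv] := eqVneq n v; first by rewrite !(sideC _ auv) hx he /maj /= andbF.
have -> : side n u z = false.
  by apply/negP => g; move: nv; rewrite (branch_unique aun auv g hz) eqxx.
by have := H n aun nv; rewrite /maj andbF /=; case: (side n u x); case: (side n u e).
Qed.

(* Every edge has a median description: take a, b near u in distinct
   branches at u, and c, d near v likewise. *)
Lemma adj_median_edge u v : adj u v -> median_edge u v.
Proof.
move=> auv; have avu : adj v u by rewrite adjC.
have [a [b [ha hb Hab]]] := leaves_near auv; have [c [d [hc hd Hcd]]] := leaves_near avu.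
have medu e : side v u (leaf e) -> md a b e = u.
  move=> he; apply: median_eq; rewrite is_median_C23.
  by apply: (median_near_side auv ha hb he) => n aun _; apply: Hab.
have medv e : side u v (leaf e) -> md c d e = v.
  move=> he; apply: median_eq; rewrite is_median_C23.
  by apply: (median_near_side avu hc hd he) => n avn _; apply: Hcd.
exists a, b, c, d; split; first by split; [apply: medu | apply: medu | apply: medv | apply: medv].
  exact: adj_neq.
move=> e hbe hde; case/orP: (side_total (leaf e) auv) => he.
  left; apply: median_eq; apply: (median_near_side auv ha he hc) => n aun nv.
  apply/negP => /andP [g1 g2]; have := medianP (leaf a) (leaf b) (leaf e).
  by apply/negP; rewrite -/(md a b e) hbe; apply: (not_median_at aun); rewrite /maj g1 g2 orbT.
right; apply: median_eq; rewrite is_median_C12; apply: (median_near_side avu hc he ha) => n avn nu.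
apply/negP => /andP [g1 g2]; have := medianP (leaf c) (leaf d) (leaf e).
by apply/negP; rewrite -/(md c d e) hde; apply: (not_median_at avn); rewrite /maj g1 g2 orbT.
Qed.

Lemma median_edge_sides p q u v a b c d : adj p q -> side p q u = false -> side p q v ->
  is_median u a b c -> is_median u a b d -> is_median v c d a -> is_median v c d b ->
  [/\ side p q a = false, side p q b = false, side p q c & side p q d].
Proof.
move=> apq pu pv /is_medianP m1 /is_medianP m2 /is_medianP m3 /is_medianP m4.
move: (m1 p q apq) (m2 p q apq) (m3 p q apq) (m4 p q apq); rewrite pu pv.
by case: (side p q a); case: (side p q b); case: (side p q c); case: (side p q d).
Qed.

Lemma between_vertex u v : u != v -> ~~ adj u v -> exists w x n,
  [/\ adj u w, side w u v, adj w x, side x w v & [/\ x != u, adj w n, n != u & n != x]].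
Proof.
move=> uv nuv; have [w auw wv] := branch_of uv; have awu : adj w u by rewrite adjC.
have wv' : w != v by apply: contraNneq nuv => <-.
have [x awx xv] := branch_of wv'.
have xu : x != u by apply: contraTneq xv => ->; rewrite sideC // wv.
have wl : w \notin codom leaf.
  apply/negP => /codomP [y ey]; subst w; have [n [_ only]] := leaf_neighbour T y.
  by rewrite (only _ awx) (only _ awu) eqxx in xu.
have [n1 [n2 [a1 a2 n12 n1x n2x]]] := inner_branching awx wl.
have [n [awn nu nx]] : exists n, [/\ adj w n, n != u & n != x].
  by case: (eqVneq n1 u) => [e|]; [exists n2; rewrite -e eq_sym | exists n1].
by exists w, x, n.
Qed.

(* Conversely, a median description forces adjacency: otherwise a leaf e in
   the third branch at the vertex w between u and v has md a b e = u,
   md c d e = v but md a c e = w. *)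
Lemma median_edge_adj u v : median_edge u v -> adj u v.
Proof.
case=> a [b [c [d [[mu1 mu2 mv1 mv2] uv H]]]]; apply: contraT => nuv; exfalso.
have [w [x [n [auw wv awx xv [xu awn nu nx]]]]] := between_vertex uv nuv.
have awu : adj w u by rewrite adjC.
have axw : adj x w by rewrite adjC.
have hu1 : is_median u (leaf a) (leaf b) (leaf c) by rewrite -mu1; apply: medianP.
have hu2 : is_median u (leaf a) (leaf b) (leaf d) by rewrite -mu2; apply: medianP.
have hv1 : is_median v (leaf c) (leaf d) (leaf a) by rewrite -mv1; apply: medianP.
have hv2 : is_median v (leaf c) (leaf d) (leaf b) by rewrite -mv2; apply: medianP.
have wuu : side w u u = false by apply/negbTE/side_far.
have xwu : side x w u = false.
  by apply/negP => g; rewrite (branch_unique awx awu g (side_refl _ _)) eqxx in xu.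
have [pa pb pc pd] := median_edge_sides awu wuu wv hu1 hu2 hv1 hv2.
have [qa qb qc qd] := median_edge_sides axw xwu xv hu1 hu2 hv1 hv2.
have [e he] := side_has_leaf awn.
have ue : side w u (leaf e) := side_sub_branch auw awn nu he.
have xe : side x w (leaf e) = false.
  by apply/negP => g; rewrite (branch_unique awn awx he g) eqxx in nx.
have m1 : md a b e = u.
  by apply: median_eq; apply: (median_replace awu _ _ _ hu1); rewrite ?pa ?pb ?pc ?ue.
have m2 : md c d e = v.
  by apply: median_eq; apply: (median_replace axw _ _ _ hv1); rewrite ?qc ?qd ?qa ?xe.
have m3 : md a c e = w.
  apply: median_eq; apply: (median_three_branches awu awx awn) => //; rewrite 1?eq_sym //.
  by rewrite sideC // pa.
case: (H e m1 m2); rewrite m3 => ew; first by rewrite ew adj_irr in auw.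
by rewrite -ew auw in nuv.
Qed.
End EdgesFromMedians.

Section Paths.
Variables (X : finType) (T : Xtree X).
Local Notation V := (V T).
Local Notation adj := (adj T).
Local Notation side := (@side X T).

Lemma set2_same (p q u v : V) : p != q -> ([set p; q] == [set u; v]) = same_edge p q u v.
Proof.
move=> pq; apply/eqP/idP => [e|]; last by case/orP => /andP [/eqP -> /eqP ->] //; rewrite setUC.
have mem w : (w \in [set p; q]) = (w \in [set u; v]) by rewrite e.
have /set2P [up|uq] : u \in [set p; q] by rewrite mem !inE eqxx.
  have /set2P [qu|qv] : q \in [set u; v] by rewrite -mem !inE eqxx orbT.
    by rewrite qu up eqxx in pq.
  by rewrite /same_edge up qv !eqxx.
have /set2P [pu|pv] : p \in [set u; v] by rewrite -mem !inE eqxx.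
  by rewrite pu uq eqxx in pq.
by rewrite /same_edge uq pv !eqxx orbT.
Qed.

Lemma walk_edges_vertex (z x : V) s e : e \in walk_edges z s -> x \in e -> x \in z :: s.
Proof.
rewrite inE; elim: s z => [|y s IH] z //=; case/orP => [/eqP -> | /IH h /h].
  by case/set2P => ->; rewrite !inE eqxx ?orbT.
by move=> xs; rewrite inE xs orbT.
Qed.

Lemma walk_cross p q x s : adj p q -> path adj x s -> uniq (x :: s) ->
  ([set p; q] \in walk_edges x s) = (side p q x != side p q (last x s)).
Proof.
move=> apq; elim: s x => [|z s IH] x /=; first by rewrite inE /= eqxx.
case/andP => axz pth /andP [xn uq].
have -> : ([set p; q] \in walk_edges x (z :: s)) =
          ([set p; q] == [set x; z]) || ([set p; q] \in walk_edges z s) by rewrite !inE.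
have [se|ne] := boolP (same_edge p q x z); last first.
  by rewrite set2_same ?adj_neq // (negbTE ne) IH // (side_edge axz ne).
have notagain : [set p; q] \notin walk_edges z s.
  apply: contra xn => /walk_edges_vertex; apply.
  by case/orP: se => /andP [/eqP -> _]; rewrite !inE eqxx ?orbT.
move: notagain; rewrite IH // negbK set2_same ?adj_neq // se => /eqP <-.
by case/orP: se => /andP [/eqP -> /eqP ->]; rewrite side_refl (negbTE (side_far apq)).
Qed.

Lemma pathE_side p q x y : adj p q -> ([set p; q] \in pathE x y) = (side p q x != side p q y).
Proof.
move=> apq; rewrite inE; apply/existsP/idP => [[k /existsP [s /and4P [pth /eqP <- uq]]]|sep].
  by rewrite -walk_cross.
move: sep; have /connectP [s pth ->] := adj_conn x y.
case: (shortenP pth) => s' pth' uq _ sep.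
have sz : size s' < #|V|.
  by have := max_card (mem (x :: s')); rewrite (card_uniqP uq).
exists (Ordinal sz); apply/existsP; exists (in_tuple s').
by rewrite pth' eqxx uq walk_cross.
Qed.

Lemma edge_ends (e : edge T) : exists p q, adj p q /\ val e = [set p; q].
Proof.
by case: e => e /=; rewrite inE => /existsP [p /existsP [q /andP [apq /eqP ->]]]; exists p, q.
Qed.

Lemma edge_in_edges p q : adj p q -> [set p; q] \in edges T.
Proof.
by move=> apq; rewrite inE; apply/existsP; exists p; apply/existsP; exists q; rewrite apq eqxx.
Qed.
End Paths.

Section Forms.
Local Open Scope ring_scope.
Variables (X : finType) (R : realFieldType) (T : Xtree X).
Local Notation V := (V T).
Local Notation adj := (adj T).
Local Notation side := (@side X T).
Local Notation leaf := (leaf T).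

Definition split_by (p q : V) (c : {set X}) :=
  [exists x in c, exists y in c, side p q (leaf x) != side p q (leaf y)].

Lemma split_by2 p q x y : split_by p q [set x; y] = (side p q (leaf x) != side p q (leaf y)).
Proof.
apply/existsP/idP => [[u /andP [uin /existsP [v /andP [vin h]]]]|h].
  by move: uin vin h; rewrite !inE => /orP [] /eqP -> /orP [] /eqP ->; rewrite ?eqxx // eq_sym.
by exists x; rewrite !inE eqxx /=; apply/existsP; exists y; rewrite !inE eqxx orbT.
Qed.

Lemma on_cord_path (e : edge T) p q (c : {set X}) : adj p q -> val e = [set p; q] ->
  [exists x in c, exists y in c, val e \in pathE (leaf x) (leaf y)] = split_by p q c.
Proof.
move=> apq ->; apply: eq_existsb => x; congr (_ && _); apply: eq_existsb => y.
by rewrite pathE_side.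
Qed.

Definition balanced (coef : {set X} -> R) (S : {set {set X}}) :=
  forall p q, adj p q -> \sum_(c in S) coef c * (split_by p q c)%:R = 0.

Lemma lam_sum (coef : {set X} -> R) (S : {set {set X}}) (w : {ffun edge T -> R}) :
  \sum_(c in S) coef c * lam c w =
  \sum_(e : edge T) w e * \sum_(c in S) coef c *
    ([exists x in c, exists y in c, val e \in pathE (leaf x) (leaf y)])%:R.
Proof.
rewrite (eq_bigr (fun c => \sum_(e : edge T) coef c *
    (([exists x in c, exists y in c, val e \in pathE (leaf x) (leaf y)])%:R * w e))).
  by rewrite exchange_big; apply: eq_bigr => e _; rewrite mulr_sumr; apply: eq_bigr => c _;
    rewrite mulrA mulrC.
move=> c _; rewrite /lam big_mkcond mulr_sumr; apply: eq_bigr => e _.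
by case: ifP => _; rewrite ?mul1r ?mul0r ?mulr0.
Qed.

(* A combination of cord forms vanishes iff its coefficients are balanced:
   evaluate at the indicator of each edge. *)
Lemma forms_vanish (coef : {set X} -> R) (S : {set {set X}}) :
  (forall w : {ffun edge T -> R}, \sum_(c in S) coef c * lam c w = 0) <-> balanced coef S.
Proof.
split=> [H p q apq | H w].
  pose e0 : edge T := exist _ [set p; q] (edge_in_edges apq).
  have := H [ffun e => (e == e0)%:R]; rewrite lam_sum (bigD1 e0) //= [X in _ + X]big1 ?addr0.
    rewrite ffunE eqxx mul1r => h0; rewrite -[RHS]h0; apply: eq_bigr => c _.
    by rewrite -(on_cord_path (e := e0) c apq erefl).
  by move=> e ne; rewrite ffunE (negbTE ne) mul0r.
rewrite lam_sum big1 // => e _; have [p [q [apq ev]]] := edge_ends e.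
rewrite (eq_bigr (fun c => coef c * (split_by p q c)%:R)) ?H ?mulr0 // => c _.
by rewrite (on_cord_path _ apq ev).
Qed.

Lemma indepE (S : {set {set X}}) :
  indep R T S <-> (forall coef, balanced coef S -> forall c, c \in S -> coef c = 0).
Proof. by split=> H coef /forms_vanish; apply: H. Qed.
End Forms.

Section Quartets.
Local Open Scope ring_scope.
Variables (X : finType) (R : realFieldType) (T : Xtree X).

Definition quartet_list (a b c d : X) := [:: [set a; c]; [set b; d]; [set a; d]; [set b; c]].
Definition quartet_cords (a b c d : X) : {set {set X}} := [set:: quartet_list a b c d].

Lemma cord_neq (x y u v : X) : x != u -> x != v -> [set x; y] != [set u; v].
Proof.
move=> xu xv; apply: contraNneq (xu) => e; move: (setU11 x [set y]).
by rewrite e !inE (negbTE xv) orbF.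
Qed.

Lemma quartet_list_uniq a b c d : uniq [:: a; b; c; d] -> uniq (quartet_list a b c d).
Proof.
rewrite /= !inE !negb_or => /and4P [/and3P [ab ac ad] /andP [bc bd] cd _].
have ba : b != a by rewrite eq_sym.
have ca : c != a by rewrite eq_sym.
have db : d != b by rewrite eq_sym.
have dc : d != c by rewrite eq_sym.
rewrite (cord_neq c ab ad) (cord_neq c ab ac) (cord_neq d ba bd) (cord_neq d ab ac) /=.
by rewrite [[set a; c]]setUC [[set b; d]]setUC (cord_neq a ca cd) (cord_neq b db dc).
Qed.

Lemma sum_quartet_cords (F : {set X} -> R) a b c d : uniq [:: a; b; c; d] ->
  \sum_(s in quartet_cords a b c d) F s =
  F [set a; c] + F [set b; d] + F [set a; d] + F [set b; c].
Proof.
move=> abcd; rewrite (eq_bigl (mem (quartet_list a b c d))) => [|s]; last by rewrite in_set.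
by rewrite -big_uniq ?quartet_list_uniq // !big_cons big_nil /= addr0 !addrA.
Qed.

Section Balance.
Variables (coef : {set X} -> R) (a b c d : X).
Hypothesis abcd : uniq [:: a; b; c; d].

Definition quartet_balance (p q : V T) :=
  let sd x := side p q (leaf T x) in
  coef [set a; c] * (sd a != sd c)%:R + coef [set b; d] * (sd b != sd d)%:R +
  coef [set a; d] * (sd a != sd d)%:R + coef [set b; c] * (sd b != sd c)%:R.

Lemma balancedE :
  balanced T coef (quartet_cords a b c d) <-> forall p q, adj T p q -> quartet_balance p q = 0.
Proof.
have sumE p q :
    \sum_(s in quartet_cords a b c d) coef s * (split_by p q s)%:R = quartet_balance p q.
  by rewrite sum_quartet_cords // !split_by2.
by split=> H p q apq; have := H p q apq; rewrite sumE.
Qed.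

(* On the pendant edge of leaf x, a cord is split iff it contains x exactly once. *)
Lemma pendant_balance x : balanced T coef (quartet_cords a b c d) ->
  coef [set a; c] * ((a == x) != (c == x))%:R + coef [set b; d] * ((b == x) != (d == x))%:R +
  coef [set a; d] * ((a == x) != (d == x))%:R + coef [set b; c] * ((b == x) != (c == x))%:R = 0.
Proof.
move/balancedE => bal; have [y [xy _]] := leaf_neighbour T x.
by have := bal _ _ xy; rewrite /quartet_balance !side_leaf // !(inj_eq (@leaf_inj _ T)).
Qed.
End Balance.

(* Without a cross split, the forms satisfy ac + bd = ad + bc. *)
Lemma quartet_dependent a b c d : uniq [:: a; b; c; d] -> ~~ cross_split T a b c d ->
  ~ indep R T (quartet_cords a b c d).
Proof.
move=> abcd ncross /indepE H.
have := quartet_list_uniq abcd.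
rewrite /= !inE !negb_or => /and4P [/and3P [n1 n2 n3] /andP [n4 n5] n6 _].
pose coef s : R := if s \in [:: [set a; c]; [set b; d]] then 1 else -1.
suff /H /(_ [set a; c]) : balanced T coef (quartet_cords a b c d).
  by rewrite in_set /coef !inE eqxx => /(_ isT) /eqP; rewrite oner_eq0.
apply/balancedE => // p q apq; rewrite /quartet_balance /coef !inE !eqxx ?orbT /=.
rewrite !(eq_sym [set a; d]) !(eq_sym [set b; c]).
rewrite (negbTE n2) (negbTE n3) (negbTE n4) (negbTE n5) /=.
have : ~~ ((side p q (leaf T a) != side p q (leaf T b)) &&
          (side p q (leaf T c) != side p q (leaf T d))).
  by apply: contra ncross => h; apply/existsP; exists p; apply/existsP; exists q; rewrite apq.
case: (side p q (leaf T a)); case: (side p q (leaf T b));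
  case: (side p q (leaf T c)); case: (side p q (leaf T d)) => //= _; lra.
Qed.

(* With a cross split, the pendant edges of a, b, c, d and the crossing edge
   give five balance equations forcing all coefficients to vanish. *)
Lemma cross_split_indep a b c d : uniq [:: a; b; c; d] -> cross_split T a b c d ->
  indep R T (quartet_cords a b c d).
Proof.
move=> abcd /existsP [p /existsP [q /andP [/andP [apq sab] scd]]]; apply/indepE => coef bal.
have cross : coef [set a; c] + coef [set b; d] = 0 \/ coef [set a; d] + coef [set b; c] = 0.
  move/balancedE: (bal) => /(_ abcd p q apq); rewrite /quartet_balance; move: sab scd.
  case: (side p q (leaf T a)); case: (side p q (leaf T b));
    case: (side p q (leaf T c)); case: (side p q (leaf T d)) => //= _ _ E;
    [right | left | left | right]; lra.
have := pendant_balance abcd a bal; have := pendant_balance abcd b bal.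
have := pendant_balance abcd c bal; have := pendant_balance abcd d bal.
move: abcd; rewrite /= !inE !negb_or => /and4P [/and3P [ab ac ad] /andP [bc bd] cd _].
rewrite !eqxx (eq_sym b a) (eq_sym c a) (eq_sym d a) (eq_sym c b) (eq_sym d b) (eq_sym d c)
  (negbTE ab) (negbTE ac)
  (negbTE ad) (negbTE bc) (negbTE bd) (negbTE cd) /= => Ed Ec Eb Ea s.
rewrite in_set !inE => /or4P [] /eqP ->; case: cross; lra.
Qed.

Lemma quartet_indep a b c d : uniq [:: a; b; c; d] ->
  indep R T (quartet_cords a b c d) <-> cross_split T a b c d.
Proof.
move=> abcd; split; last exact: cross_split_indep.
move=> ind; have [//|ncross] := boolP (cross_split T a b c d).
by case: (quartet_dependent abcd ncross ind).
Qed.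
End Quartets.

Definition distinct3 (X : eqType) (a b c : X) := [&& a != b, a != c & b != c].

Lemma distinct3_C12 (X : eqType) (a b c : X) : distinct3 a b c = distinct3 b a c.
Proof. by rewrite /distinct3 (eq_sym b a); case: (a != b); case: (a != c); case: (b != c). Qed.

Lemma distinct3_C23 (X : eqType) (a b c : X) : distinct3 a b c = distinct3 a c b.
Proof. by rewrite /distinct3 (eq_sym c b); case: (a != b); case: (a != c); case: (b != c). Qed.

Lemma distinct3_rot (X : eqType) (a b c : X) : distinct3 a b c = distinct3 c a b.
Proof. by rewrite distinct3_C23 distinct3_C12. Qed.

Section LeafMedianCombinatorics.
Variables (X : finType) (T : Xtree X).
Local Notation md := (leaf_median T).

Lemma leaf_median_C12 a b c : md a b c = md b a c.
Proof. exact: median_C12. Qed.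

Lemma leaf_median_C23 a b c : md a b c = md a c b.
Proof. exact: median_C23. Qed.

Lemma leaf_median_rot a b c : md a b c = md c a b.
Proof. by rewrite leaf_median_C23 leaf_median_C12. Qed.

Definition repeated (a b c : X) := if (a == b) || (a == c) then a else b.

Lemma leaf_median_repeated a b c : ~~ distinct3 a b c -> md a b c = leaf T (repeated a b c).
Proof.
rewrite /distinct3 /repeated.
have [<-|ab] /= := eqVneq a b; first by rewrite /leaf_median median_xxz.
have [<-|ac] /= := eqVneq a c; first by rewrite leaf_median_C23 /leaf_median median_xxz.
by rewrite negbK => /eqP <-; rewrite leaf_median_C12 leaf_median_C23 /leaf_median median_xxz.
Qed.

Lemma leaf_median_distinct a b c x : distinct3 a b c -> md a b c != leaf T x.
Proof. by case/and3P => ab ac bc; apply: leaf_median_inner. Qed.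

Lemma distinct3_median a b c a' b' c' :
  md a b c = md a' b' c' -> distinct3 a' b' c' -> distinct3 a b c.
Proof.
move=> e d'; apply: contraT => nd; move: (leaf_median_distinct (repeated a b c) d').
by rewrite -e leaf_median_repeated // eqxx.
Qed.

Lemma leaf_median_exchange a b c a' b' c' : md a b c = md a' b' c' ->
  exists2 t, t \in [:: a'; b'; c'] & md a b t = md a b c.
Proof.
move=> e; case/or3P: (median_exchange e) => /eqP h; [exists a'|exists b'|exists c'];
  by rewrite ?inE ?eqxx ?orbT.
Qed.
End LeafMedianCombinatorics.

Section Transfer.
Variables (X : finType) (R : realFieldType) (T1 T2 : Xtree X).
Hypothesis hme : matroid_eq R T1 T2.
Local Notation md1 := (leaf_median T1).
Local Notation md2 := (leaf_median T2).

Lemma quartet_cords_sub a b c d : uniq [:: a; b; c; d] -> quartet_cords a b c d \subset cords X.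
Proof.
rewrite /= !inE !negb_or => /and4P [/and3P [ab ac ad] /andP [bc bd] cd _].
by apply/subsetP => s; rewrite in_set !inE => /or4P [] /eqP ->; rewrite cards2 ?ac ?bd ?ad ?bc.
Qed.

(* The four-point condition is a statement about independence of quartet
   cords, hence it transfers from T1 to T2. *)
Lemma transfer_pair a b c d : distinct3 a b c -> distinct3 a b d ->
  md1 a b c = md1 a b d -> md2 a b c = md2 a b d.
Proof.
case/and3P => ab ac bc /and3P [_ ad bd] e; have [-> //|cd] := eqVneq c d.
have abcd : uniq [:: a; b; c; d] by rewrite /= !inE !negb_or ab ac ad bc bd cd.
apply/eqP; move/eqP: e; rewrite !leaf_median_cross; apply: contra => cross2.
have [_ to1] := hme (quartet_cords_sub abcd).
by apply/(quartet_indep R T1 abcd)/to1/(quartet_indep R T2 abcd).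
Qed.

(* Triples sharing the element x: exchange at the pair (x, a) replaces b by
   y or z, after which the triples share two elements. *)
Lemma transfer_one_common a b x y z : distinct3 a b x -> distinct3 y z x ->
  md1 a b x = md1 y z x -> md2 a b x = md2 y z x.
Proof.
move=> dabx dyzx e; rewrite leaf_median_rot [md2 y z x]leaf_median_rot.
have {}e : md1 x a b = md1 x y z by rewrite -leaf_median_rot e leaf_median_rot.
have dxab : distinct3 x a b by rewrite -distinct3_rot.
have dxyz : distinct3 x y z by rewrite -distinct3_rot.
suff via u w : distinct3 x u w -> md1 x a b = md1 x u w -> md1 x a u = md1 x a b ->
    md2 x a b = md2 x u w.
  have [t tin h] := leaf_median_exchange e; have dxat := distinct3_median h dxab.
  move: tin; rewrite !inE => /or3P [] /eqP tE; subst t.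
  - by move: dxat; rewrite /distinct3 eqxx /= andbF.
  - exact: via dxyz e h.
  - rewrite [md2 x y z]leaf_median_C23; apply: (via z y _ _ h); first by rewrite distinct3_C23.
    by rewrite e leaf_median_C23.
move=> dxuw exu hu; have dxau := distinct3_median hu dxab.
rewrite -(transfer_pair dxau dxab hu) leaf_median_C23.
apply: transfer_pair => //; first by rewrite distinct3_C23.
by rewrite leaf_median_C23 hu.
Qed.

(* Distinct triples: exchange at the pair (a, b) brings in an element of the
   second triple, reducing to a common element. *)
Lemma transfer_distinct a b c a' b' c' : distinct3 a b c -> distinct3 a' b' c' ->
  md1 a b c = md1 a' b' c' -> md2 a b c = md2 a' b' c'.
Proof.
move=> d d' e; have [t tin h] := leaf_median_exchange e.
have dt := distinct3_median h d; rewrite -(transfer_pair dt d h); rewrite -h in e.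
move: tin; rewrite !inE => /or3P [] /eqP tE; subst t.
- rewrite -(leaf_median_rot T2 b' c' a'); apply: transfer_one_common => //.
    by rewrite distinct3_rot.
  by rewrite e (leaf_median_rot T1 b' c' a').
- rewrite [md2 a' b' c']leaf_median_rot; apply: transfer_one_common => //.
    by rewrite -distinct3_rot.
  by rewrite e leaf_median_rot.
- exact: transfer_one_common.
Qed.

Lemma leaf_median_transfer a b c a' b' c' : md1 a b c = md1 a' b' c' -> md2 a b c = md2 a' b' c'.
Proof.
move=> e; have [d|nd] := boolP (distinct3 a b c).
  exact: transfer_distinct d (distinct3_median (esym e) d) e.
have nd' : ~~ distinct3 a' b' c' by apply: contra nd; apply: distinct3_median e.
by move: e; rewrite !leaf_median_repeated // => /(@leaf_inj _ T1) ->.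
Qed.
End Transfer.

Lemma connect_morph (A B : finType) (e1 : rel A) (e2 : rel B) (f : A -> B) :
  (forall x y, e1 x y -> e2 (f x) (f y)) -> forall x y, connect e1 x y -> connect e2 (f x) (f y).
Proof.
move=> H x y /connectP [s pth ->]; apply/connectP; exists (map f s); last by rewrite last_map.
by elim: s x pth => [|z s IH] x //= /andP [h1 h2]; rewrite H // IH.
Qed.

(* Injections both ways between two finite graphs that both preserve
   adjacency also reflect it: they biject the edge sets. *)
Lemma adj_reflect (A B : finType) (eA : rel A) (eB : rel B) (f : A -> B) (g : B -> A) :
  injective f -> injective g ->
  (forall u v, eA u v -> eB (f u) (f v)) -> (forall u v, eB u v -> eA (g u) (g v)) ->
  forall u v, eB (f u) (f v) = eA u v.
Proof.
move=> fi gi fe ge u v; apply/idP/idP => [euv|]; last exact: fe.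
pose EA := [set p : A * A | eA p.1 p.2]; pose EB := [set p : B * B | eB p.1 p.2].
pose F (p : A * A) := (f p.1, f p.2); pose G (p : B * B) := (g p.1, g p.2).
have Fi : injective F by move=> [a b] [c d] [/fi -> /fi ->].
have Gi : injective G by move=> [a b] [c d] [/gi -> /gi ->].
have sF : F @: EA \subset EB.
  by apply/subsetP => _ /imsetP [[a b] h ->]; rewrite !inE /=; apply: fe; rewrite inE in h.
have sG : G @: EB \subset EA.
  by apply/subsetP => _ /imsetP [[a b] h ->]; rewrite !inE /=; apply: ge; rewrite inE in h.
have cardF : #|F @: EA| = #|EB|.
  apply/eqP; rewrite eqn_leq subset_leq_card //= card_imset //.
  by rewrite -(card_imset _ Gi) subset_leq_card.
have /imsetP [[a b]] : (f u, f v) \in F @: EA by rewrite (subset_cardP cardF sF) inE.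
by rewrite inE /= => hab [/fi -> /fi ->].
Qed.

Section MedianMap.
Variables (X : finType) (R : realFieldType) (T1 T2 : Xtree X).
Hypotheses (h12 : matroid_eq R T1 T2) (h21 : matroid_eq R T2 T1).
Variable x0 : X.

Definition median_map (v : V T1) : V T2 :=
  let t := odflt (x0, x0, x0) [pick t : X * X * X | leaf_median T1 t.1.1 t.1.2 t.2 == v] in
  leaf_median T2 t.1.1 t.1.2 t.2.

(* Well defined: any two triples with the same T1-median have the same T2-median. *)
Lemma median_map_median a b c : median_map (leaf_median T1 a b c) = leaf_median T2 a b c.
Proof.
rewrite /median_map; case: pickP => [t /eqP h | none] /=; first exact: (leaf_median_transfer h12 h).
by have := none (a, b, c); rewrite eqxx.
Qed.

(* Injective, since coincidences of leaf medians also transfer back. *)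
Lemma median_map_inj : injective median_map.
Proof.
move=> u v; have [a [b [c <-]]] := leaf_median_surj x0 u.
have [a' [b' [c' <-]]] := leaf_median_surj x0 v.
by rewrite !median_map_median; apply: (leaf_median_transfer h21).
Qed.

(* A leaf is the median of itself repeated. *)
Lemma median_map_leaf x : median_map (leaf T1 x) = leaf T2 x.
Proof.
have e T : leaf T x = leaf_median T x x x by rewrite /leaf_median median_xxz.
by rewrite e median_map_median -e.
Qed.

(* The median description of edges is preserved, hence so is adjacency. *)
Lemma median_map_adj u v : adj T1 u v -> adj T2 (median_map u) (median_map v).
Proof.
move/adj_median_edge => [a [b [c [d [[e1 e2 e3 e4] uv H]]]]].
apply: median_edge_adj; exists a, b, c, d; split; first split.
- by rewrite -e1 median_map_median.
- by rewrite -e2 median_map_median.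
- by rewrite -e3 median_map_median.
- by rewrite -e4 median_map_median.
- by apply: contra uv => /eqP /median_map_inj ->.
move=> e he1 he2.
have g1 : leaf_median T1 a b e = u.
  by rewrite -e1; apply: (leaf_median_transfer h21); rewrite he1 -e1 median_map_median.
have g2 : leaf_median T1 c d e = v.
  by rewrite -e3; apply: (leaf_median_transfer h21); rewrite he2 -e3 median_map_median.
by case: (H e g1 g2) => h; [left|right]; rewrite -h median_map_median.
Qed.
End MedianMap.

Section IsomorphicTrees.
Local Open Scope ring_scope.
Variables (X : finType) (R : realFieldType) (T1 T2 : Xtree X).
Variables (f : V T1 -> V T2) (g : V T2 -> V T1).
Hypotheses (fK : cancel f g) (gK : cancel g f).
Hypothesis f_adj : forall u v, adj T2 (f u) (f v) = adj T1 u v.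
Hypothesis f_leaf : forall x, f (leaf T1 x) = leaf T2 x.

(* The isomorphism maps the forest T1 \ pq onto T2 \ f p f q, hence sides to sides. *)
Lemma side_iso p q z : side (f p) (f q) (f z) = side p q z.
Proof.
have fi := can_inj fK.
have cutE x y : cut (f p) (f q) (f x) (f y) = cut p q x y.
  by rewrite /cut /same_edge f_adj !(inj_eq fi).
apply/idP/idP => [/(connect_morph (f := g)) | ]; last by apply: connect_morph => x y; rewrite cutE.
by rewrite !fK; apply => x y; rewrite -cutE !gK.
Qed.

(* Since leaves are fixed, the edge f p f q splits exactly the cords pq splits. *)
Lemma split_by_iso p q c : split_by (f p) (f q) c = split_by p q c.
Proof.
apply: eq_existsb => x; congr (_ && _); apply: eq_existsb => y.
by rewrite -!f_leaf !side_iso.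
Qed.

(* Isomorphic X-trees split every cord along corresponding edges. *)
Lemma iso_matroid_eq : matroid_eq R T1 T2.
Proof.
move=> S _; rewrite !indepE; split=> H coef bal; apply: H => p q apq.
  by rewrite -[RHS](bal (f p) (f q)) ?f_adj //; apply: eq_bigr => c _; rewrite split_by_iso.
rewrite -(gK p) -(gK q) -[RHS](bal (g p) (g q)); last by rewrite -f_adj !gK.
by apply: eq_bigr => c _; rewrite split_by_iso.
Qed.
End IsomorphicTrees.

Theorem mainTheorem8 (X : finType) (hX : 3 <= #|X|) (R : realFieldType)
  (T1 T2 : Xtree X) :
  matroid_eq R T1 T2 <-> xtree_iso T1 T2.
Proof.
split=> [h12 | [f [[g fK gK] f_adj f_leaf]]]; last exact: (iso_matroid_eq R fK gK f_adj f_leaf).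
have h21 : matroid_eq R T2 T1 by move=> S sub; apply: iff_sym; apply: h12.
have /card_gt0P [x0 _] : 0 < #|X| by apply: leq_trans hX.
have f_inj : injective (median_map T2 x0) := @median_map_inj _ _ _ _ h12 h21 x0.
have g_inj : injective (median_map T1 x0) := @median_map_inj _ _ _ _ h21 h12 x0.
exists (median_map T2 x0); split.
- exact: inj_card_bij f_inj (leq_card _ g_inj).
- exact: adj_reflect f_inj g_inj (median_map_adj h12 h21 x0) (median_map_adj h21 h12 x0).
- exact: median_map_leaf h12 x0.
Qed.
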